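(* Let $E(\boldsymbol x,\boldsymbol\theta)$, $\boldsymbol x\in\mathbb{R}^d$, $\boldsymbol\theta\in\mathbb{R}^n$, be an energy function with Boltzmann distribution $p_\mathrm{m}(\boldsymbol x,\boldsymbol\theta)=e^{-\beta E(\boldsymbol x,\boldsymbol\theta)}/Z(\boldsymbol\theta)$, $\beta>0$. Let $p_\mathrm{s}$ be the distribution of a system obeying the overdamped Langevin equation $\dot{\boldsymbol x}=-\mu\nabla_{\boldsymbol x}E(\boldsymbol x,\boldsymbol\theta(t))+\boldsymbol\xi$, initialized in equilibrium ($p_\mathrm{s}(\cdot,0)=p_\mathrm{m}(\cdot,\boldsymbol\theta(0))$). Let the parameters be driven slowly for a time $\tau$ according to $$\dot{\boldsymbol\theta}=-\boldsymbol\eta\,\nabla_{\boldsymbol\theta}\mathcal{L}_\mathrm{approx},\qquad \nabla_{\boldsymbol\theta}\mathcal{L}_\mathrm{approx}=\langle\nabla_{\boldsymbol\theta}E\rangle_{p_\mathrm{d}}-\langle\nabla_{\boldsymbol\theta}E\rangle_{p_\mathrm{s}},$$ such that for all $t\in[0,\tau)$ the slow-driving approximation holds in the form $$\nabla_{\boldsymbol\theta}\mathcal{L}_\mathrm{bias}=\langle\nabla_{\boldsymbol\theta}E\rangle_{p_\mathrm{s}}-\langle\nabla_{\boldsymbol\theta}E\rangle_{p_\mathrm{m}}=\boldsymbol\zeta(\boldsymbol\theta)\,\dot{\boldsymbol\theta},$$ where $\boldsymbol\zeta=\beta^{-1}(\boldsymbol\tau^\mathrm{r}\odot\boldsymbol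 g)$ is the thermodynamic metric. If the (matrix) learning rate follows the schedule $$\boldsymbol\eta^{-1}(\boldsymbol\theta,t)=\beta^{-1}\big(\tau-t+\boldsymbol\tau^\mathrm{r}(\boldsymbol\theta)\big)\odot\boldsymbol g(\boldsymbol\theta),$$ then for $t\in[0,\tau)$ $$\dot{\boldsymbol\theta}=-\frac{\beta}{\tau-t}\,\boldsymbol g^{-1}\,\nabla_{\boldsymbol\theta}\mathcal{L}_\mathrm{MLE},\qquad \nabla_{\boldsymbol\theta}\mathcal{L}_\mathrm{MLE}=\langle\nabla_{\boldsymbol\theta}E\rangle_{p_\mathrm{d}}-\langle\nabla_{\boldsymbol\theta}E\rangle_{p_\mathrm{m}},$$ which is a natural gradient flow.
   Context: $\langle f\rangle_p$ denotes expectation under density $p$; $p_\mathrm{d}$ is a fixed data distribution; $\mu>0$ is the mobility and $\boldsymbol\xi$ is white noise with mean zero and variance $2\mu\beta^{-1}$. $\mathcal{L}_\mathrm{MLE}=\langle-\beta^{-1}\log p_\mathrm{m}\rangle_{p_\mathrm{d}}$ is the (scaled) negative log-likelihood and $\mathcal{L}_\mathrm{bias}=\mathcal{L}_\mathrm{MLE}-\mathcal{L}_\mathrm{approx}$. $\boldsymbol g$ is the Fisher metric, $g_{ij}=\langle(\partial_{\theta_i}\log p_\mathrm{m})(\partial_{\theta_j}\log p_\mathrm{m})\rangle_{p_\mathrm{m}}$, assumed positive definite; $\boldsymbol\tau^\mathrm{r}(\boldsymbol\theta)$ is the $n\times n$ matrix of integral relaxation times (characteristic correlation times of the forces $\nabla_{\boldsymbol\theta}\log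 p_\mathrm{m}$), chosen so that $\boldsymbol\zeta$ is symmetric positive definite. $\odot$ is the Hadamard (entrywise) product, and in $\tau-t+\boldsymbol\tau^\mathrm{r}$ the scalar $\tau-t$ is added to every entry of $\boldsymbol\tau^\mathrm{r}$. *)

From HB Require Import structures.
From mathcomp Require Import all_boot all_order all_algebra.
From mathcomp Require Import all_classical all_reals all_analysis.
Set Implicit Arguments. Unset Strict Implicit. Unset Printing Implicit Defensive.
Import Order.TTheory GRing.Theory Num.Theory.
Import numFieldNormedType.Exports.
Local Open Scope classical_set_scope.
Local Open Scope ring_scope.

(* State space: an abstract measure space (X, mu) (R^d with Lebesgue measure
   is the instance of the paper); parameters theta are column vectors 'cV_n. *)

Definition pderiv (R : realType) (n : nat) (f : 'cV[R]_n -> R)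
    (th : 'cV[R]_n) (i : 'I_n) : R :=
  derive1 (fun h : R => f (th + h *: delta_mx i 0)) 0.

Definition gradE (R : realType) (X : Type) (n : nat)
    (E : X -> 'cV[R]_n -> R) (x : X) (th : 'cV[R]_n) : 'cV[R]_n :=
  \col_i pderiv (E x) th i.

Definition expect (d : measure_display) (X : measurableType d) (R : realType)
    (mu : {measure set X -> \bar R}) (p : X -> R) (f : X -> R) : R :=
  Rintegral mu setT (fun x => p x * f x).

Definition expectv (d : measure_display) (X : measurableType d) (R : realType)
    (n : nat) (mu : {measure set X -> \bar R}) (p : X -> R)
    (F : X -> 'cV[R]_n) : 'cV[R]_n :=
  \col_i expect mu p (fun x => F x i 0).

Definition partition (d : measure_display) (X : measurableType d) (R : realType)
    (n : nat) (mu : {measure set X -> \bar R}) (beta : R)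
    (E : X -> 'cV[R]_n -> R) (th : 'cV[R]_n) : R :=
  Rintegral mu setT (fun x => expR (- beta * E x th)).

Definition boltzmann (d : measure_display) (X : measurableType d) (R : realType)
    (n : nat) (mu : {measure set X -> \bar R}) (beta : R)
    (E : X -> 'cV[R]_n -> R) (th : 'cV[R]_n) (x : X) : R :=
  expR (- beta * E x th) / partition mu beta E th.

Definition fisher (d : measure_display) (X : measurableType d) (R : realType)
    (n : nat) (mu : {measure set X -> \bar R}) (beta : R)
    (E : X -> 'cV[R]_n -> R) (th : 'cV[R]_n) : 'M[R]_n :=
  \matrix_(i, j) expect mu (boltzmann mu beta E th)
     (fun x => pderiv (fun th' => ln (boltzmann mu beta E th' x)) th i *
               pderiv (fun th' => ln (boltzmann mu beta E th' x)) th j).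

Definition hadamard (R : pzRingType) (m n : nat) (A B : 'M[R]_(m, n)) : 'M[R]_(m, n) :=
  \matrix_(i, j) (A i j * B i j).

Definition posdef (R : realType) (n : nat) (A : 'M[R]_n) : Prop :=
  A^T = A /\ forall v : 'cV[R]_n, v != 0 -> 0 < (v^T *m A *m v) 0 0.

Definition vderiv (R : realType) (n : nat) (theta : R -> 'cV[R]_n) (t : R) : 'cV[R]_n :=
  \col_i derive1 (fun s : R => theta s i 0) t.

Definition thermo_metric (R : realType) (n : nat) (beta : R) (taur g : 'M[R]_n) : 'M[R]_n :=
  beta^-1 *: hadamard taur g.

Definition eta_inv_schedule (R : realType) (n : nat) (beta tau t : R)
    (taur g : 'M[R]_n) : 'M[R]_n :=
  beta^-1 *: hadamard (const_mx (tau - t) + taur) g.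

From HB Require Import structures.
From mathcomp Require Import all_boot all_order all_algebra.
From mathcomp Require Import all_classical all_reals all_analysis.
Set Implicit Arguments.
Unset Strict Implicit.
Unset Printing Implicit Defensive.
Import Order.TTheory GRing.Theory Num.Theory.
Import numFieldNormedType.Exports.
Local Open Scope classical_set_scope.
Local Open Scope ring_scope.

(* The statement is pointwise in time and purely algebraic.  Writing the
   schedule as eta^-1 = c g + zeta with c = (tau - t) / beta, the learning
   dynamics give grad L_approx = -(c g + zeta) thetadot, while slow driving
   gives grad L_bias = zeta thetadot; adding them, the dissipative term zeta
   thetadot cancels and grad L_MLE = -c g thetadot.  Since the Fisher metric
   is positive definite, hence invertible, this solves for thetadot. *)

Lemma hadamardDl (R : pzRingType) (m n : nat) (A B C : 'M[R]_(m, n)) :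
  hadamard (A + B) C = hadamard A C + hadamard B C.
Proof. by apply/matrixP => i j; rewrite !mxE mulrDl. Qed.

Lemma hadamard_const_mxl (R : pzRingType) (m n : nat) (c : R) (A : 'M[R]_(m, n)) :
  hadamard (const_mx c) A = c *: A.
Proof. by apply/matrixP => i j; rewrite !mxE. Qed.

Lemma eta_inv_scheduleE (R : realType) (n : nat) (beta tau t : R)
    (taur g : 'M[R]_n) :
  eta_inv_schedule beta tau t taur g =
    (beta^-1 * (tau - t)) *: g + thermo_metric beta taur g.
Proof.
by rewrite /eta_inv_schedule hadamardDl hadamard_const_mxl scalerDr scalerA.
Qed.

Lemma posdef_unitmx (R : realType) (n : nat) (A : 'M[R]_n) :
  posdef A -> A \in unitmx.
Proof.
move=> [_ Apos]; rewrite unitmxE unitfE; apply/negP => /det0P [v v0 vA].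
have := Apos v^T; rewrite trmx_eq0 v0 trmxK => /(_ isT).
by rewrite vA mul0mx mxE ltxx.
Qed.

Section NaturalGradient.
Variables (R : fieldType) (n : nat).
Variables (eta g zeta : 'M[R]_n) (c : R).
Variables (grad_d grad_s grad_m thetadot : 'cV[R]_n).

Hypothesis eta_unit : eta \in unitmx.
Hypothesis eta_invE : invmx eta = c *: g + zeta.
Hypothesis learning_dynamics : thetadot = - (eta *m (grad_d - grad_s)).
Hypothesis slow_driving : grad_s - grad_m = zeta *m thetadot.

Lemma grad_mle_metric : grad_d - grad_m = - (c *: (g *m thetadot)).
Proof.
have approx : grad_d - grad_s = - (invmx eta *m thetadot).
  by rewrite learning_dynamics mulmxN mulKmx // opprK.
rewrite -(subrKA grad_s) approx slow_driving eta_invE mulmxDl -scalemxAl.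
by rewrite opprD addrNK.
Qed.

Lemma natural_gradient_flow :
  g \in unitmx -> c != 0 ->
  thetadot = - (c^-1 *: (invmx g *m (grad_d - grad_m))).
Proof.
move=> g_unit c0.
by rewrite grad_mle_metric mulmxN -scalemxAr mulKmx // scalerN opprK
  scalerA mulVf // scale1r.
Qed.

End NaturalGradient.

Theorem theorem1 (R : realType) (d : measure_display) (X : measurableType d)
    (mu : {measure set X -> \bar R}) (n : nat)
    (E : X -> 'cV[R]_n -> R) (beta tau : R)
    (pd : X -> R) (ps : R -> X -> R)
    (theta : R -> 'cV[R]_n)
    (taur : 'cV[R]_n -> 'M[R]_n)
    (eta : 'cV[R]_n -> R -> 'M[R]_n) :
  let pm := boltzmann mu beta E in
  let g := fisher mu beta E in
  let zeta := fun th => thermo_metric beta (taur th) (g th) in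
  let avg := fun (p : X -> R) th => expectv mu p (fun x => gradE E x th) in
  0 < beta ->
  (* Fisher metric positive definite, tau^r chosen so that zeta is s.p.d. *)
  (forall th, posdef (g th)) ->
  (forall th, posdef (zeta th)) ->
  (* initialization in equilibrium *)
  ps 0 = pm (theta 0) ->
  (* learning-rate schedule *)
  (forall th t, 0 <= t < tau ->
     eta th t \in unitmx /\
     invmx (eta th t) = eta_inv_schedule beta tau t (taur th) (g th)) ->
  (forall t, 0 <= t < tau ->
     (forall i : 'I_n, derivable (fun s => theta s i 0) t 1)) ->
  (* learning dynamics thetadot = - eta grad L_approx *)
  (forall t, 0 <= t < tau ->
     vderiv theta t =
       - (eta (theta t) t *m (avg pd (theta t) - avg (ps t) (theta t)))) ->
  (* slow-driving approximation grad L_bias = zeta thetadot *)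
  (forall t, 0 <= t < tau ->
     avg (ps t) (theta t) - avg (pm (theta t)) (theta t) =
       zeta (theta t) *m vderiv theta t) ->
  forall t, 0 <= t < tau ->
    vderiv theta t =
      - ((beta / (tau - t)) *: (invmx (g (theta t))
            *m (avg pd (theta t) - avg (pm (theta t)) (theta t)))).
Proof.
move=> pm g zeta avg beta_gt0 g_posdef _ _ schedule _ dynamics slow t t_range.
have [eta_unit eta_inv] := schedule (theta t) t t_range.
have c_neq0 : beta^-1 * (tau - t) != 0.
  have [_ t_lt_tau] := andP t_range.
  by rewrite mulf_neq0 ?invr_eq0 ?gt_eqF ?subr_gt0.
rewrite eta_inv_scheduleE in eta_inv.
rewrite (natural_gradient_flow eta_unit eta_inv (dynamics t t_range)
  (slow t t_range) (posdef_unitmx (g_posdef _)) c_neq0).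
by rewrite invfM invrK mulrC.
Qed.
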